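(* Let $d\geq 1$ and $m\geq 2$ be integers, and let $M$ be a non-empty finite set of $m$-gons in $\mathbb{R}^d$. Let $\mathcal{H}(M)$ be the hypergraph with vertex set $\mathbb{R}^d$ and edge set $\{X\subseteq \mathbb{R}^d \mid X \text{ is congruent in } \mathbb{R}^d \text{ to some } T\in M\}$. Then there exists a finite set $S$ of $(m+1)$-gons in $\mathbb{R}^d$ such that $\mathcal{H}(M)$ is equivalent to the $(m+1)$-uniform hypergraph $\mathcal{H}(S)$ with vertex set $\mathbb{R}^d$ and edge set $\{Y\subseteq\mathbb{R}^d \mid Y \text{ is congruent in } \mathbb{R}^d \text{ to some element of } S\}$.
   Context: $\mathbb{R}^d$ carries the Euclidean norm; two subsets are congruent if one is the image of the other under an isometry of Euclidean $\mathbb{R}^d$. An $m$-gon is simply an arbitrary subset of $\mathbb{R}^d$ of cardinality exactly $m$ (collinear points allowed). A hypergraph is a pair $(V,E)$ with $V$ non-empty and $E$ a set of subsets of $V$, each of cardinality at least $2$. A proper coloring is a map $\varphi:V\to C$ such that no edge $e\in E$ has $\varphi|_e$ constant; the chromatic number $\chi$ is the least $|C|$ for which a proper coloring exists. Two hypergraphs $\mathcal{H},\mathcal{G}$ on the same vertex set $S$ are equivalent if $\chi(\mathcal{H})=\chi(\mathcal{G})$ and, for every set $C$ with $|C|=\chi(\mathcal{H})=\chi(\mathcal{G})$, a map $\varphi:S\to C$ is a proper coloring of $\mathcal{H}$ if and only if it is a proper coloring of $\mathcal{G}$. *)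

From HB Require Import structures.
From mathcomp Require Import all_boot all_order all_algebra.
From mathcomp Require Import Rstruct.
From Stdlib Require List.
Set Implicit Arguments. Unset Strict Implicit. Unset Printing Implicit Defensive.
Import Order.TTheory GRing.Theory Num.Theory.
Local Open Scope ring_scope.

Definition pt (d : nat) := 'rV[Rdefinitions.R]_d.

Definition edist (d : nat) (x y : pt d) : Rdefinitions.R :=
  Num.sqrt (\sum_(i < d) (x ord0 i - y ord0 i) ^+ 2).

Definition pset (d : nat) := pt d -> Prop.

Definition isometry (d : nat) (f : pt d -> pt d) : Prop :=
  forall x y, edist (f x) (f y) = edist x y.

Definition congruent (d : nat) (A B : pset d) : Prop :=
  exists f : pt d -> pt d, isometry f /\
    (forall y, B y <-> exists x, A x /\ f x = y).

(* An m-gon: a subset of R^d of cardinality exactly m. *)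
Definition is_gon (d m : nat) (A : pset d) : Prop :=
  exists s : seq (pt d), uniq s /\ size s = m /\ (forall x, A x <-> x \in s).

Definition hypergraph (V : Type) := (V -> Prop) -> Prop.

Definition proper_coloring (V C : Type) (E : hypergraph V) (phi : V -> C) : Prop :=
  forall e, E e -> ~ (forall x y, e x -> e y -> phi x = phi y).

Definition colorable (V : Type) (E : hypergraph V) (k : nat) : Prop :=
  exists phi : V -> 'I_k, proper_coloring E phi.

Definition chromatic_number_is (V : Type) (E : hypergraph V) (k : nat) : Prop :=
  colorable E k /\ (forall k', (k' < k)%N -> ~ colorable E k').

Definition equivalent_hg (V : Type) (H G : hypergraph V) : Prop :=
  exists k : nat, chromatic_number_is H k /\ chromatic_number_is G k /\
    (forall (C : finType), #|C| = k ->
       forall phi : V -> C, proper_coloring H phi <-> proper_coloring G phi).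

Definition HM (d : nat) (M : seq (pset d)) : hypergraph (pt d) :=
  fun X => exists T, List.In T M /\ congruent T X.

(* Let k be the chromatic number of H(M); it is finite because a grid colouring
   of R^d never gives the same colour to two points whose distance lies in a
   fixed band [lo, hi] with lo > 0.  Call S j-absorbing if every edge f T of
   H(M) lies in a finite set P such that every colouring of P with at most j
   colours in which f T is monochromatic has a monochromatic edge of H(S)
   inside P.  The empty S is 0-absorbing.  If S is j-absorbing and j < k, the
   de Bruijn-Erdos compactness theorem gives a finite Q0 on which every
   j-colouring has a monochromatic edge of H(M); adding to Q0 an absorbing set
   for each of its finitely many edges yields a finite Q on which every
   j-colouring has a monochromatic edge of H(S).  Adding the (m+1)-gons
   T u {q + t}, q in Q, with t a translation moving Q off T, makes S
   (j+1)-absorbing.  A k-absorbing S consisting of such one-point extensions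
   has exactly the proper k-colourings of H(M), and chromatic number k. *)

From mathcomp Require Import all_boot all_order all_algebra.
From mathcomp Require Import Rstruct.
From Stdlib Require List.
From mathcomp Require Import lra.
From mathcomp Require Import boolp classical_sets filter.
Set Implicit Arguments. Unset Strict Implicit. Unset Printing Implicit Defensive.
Import Order.TTheory GRing.Theory Num.Theory.

Definition mono (V C : Type) (phi : V -> C) (e : V -> Prop) :=
  forall x y, e x -> e y -> phi x = phi y.

Lemma exists_chromatic_number (V : Type) (E : hypergraph V) (k0 : nat) :
  colorable E k0 -> exists k, chromatic_number_is E k.
Proof.
move=> /asboolP col_k0.
have [k /asboolP col_k min_k] :=
  ex_minnP (ex_intro (fun k => `[< colorable E k >]) k0 col_k0).
exists k; split => // k' lt_k'k /asboolP /min_k; by rewrite leqNgt lt_k'k.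
Qed.

Section Hypergraphs.
Variable V : eqType.
Implicit Types (E F : hypergraph V) (e : V -> Prop) (P Q : seq V).

Definition finite_edges E := forall e, E e -> exists s : seq V, forall x, e x <-> x \in s.

Definition mono_edge_in E P (C : Type) (phi : V -> C) :=
  exists2 e, E e & (forall x, e x -> x \in P) /\ mono phi e.

Definition chi_on_ge E P (j : nat) :=
  forall (C : eqType) (phi : V -> C) (L : seq C), (size L < j)%N ->
    {in P, forall x, phi x \in L} -> mono_edge_in E P phi.

Definition absorbs_in F (j : nat) e P :=
  (forall x, e x -> x \in P) /\
  forall (C : eqType) (phi : V -> C) (L : seq C), (size L <= j)%N ->
    {in P, forall x, phi x \in L} -> mono phi e -> mono_edge_in F P phi.

Definition absorbs E F (j : nat) := forall e, E e -> exists P, absorbs_in F j e P.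

Lemma mono_edge_in_sub E P P' (C : Type) (phi : V -> C) :
  {subset P <= P'} -> mono_edge_in E P phi -> mono_edge_in E P' phi.
Proof. by move=> sPP' [e Ee [eP mono_e]]; exists e => //; split => // x /eP /sPP'. Qed.

Lemma chi_on_ge_sub E E' P j :
  (forall e, E e -> E' e) -> chi_on_ge E P j -> chi_on_ge E' P j.
Proof.
move=> sEE' chiP C phi L sizeL PL.
by have [e /sEE' E'e eP] := chiP C phi L sizeL PL; exists e.
Qed.

Section Compactness.
Local Open Scope classical_set_scope.

Lemma filter_forall_in (T : Type) (I : eqType) (F : set_system T)
    (A : I -> set T) (s : seq I) :
  Filter F -> (forall i, i \in s -> F (A i)) ->
  F [set t | forall i, i \in s -> A i t].
Proof.
move=> FF; elim: s => [|i s IHs] FA; first by apply: filterS filterT.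
have FAs j : j \in s -> F (A j) by move=> js; apply: FA; rewrite inE js orbT.
apply: filterS (filterI (FA i (mem_head i s)) (IHs FAs)).
by move=> t [Ait Ast] j; rewrite inE => /predU1P[->|/Ast].
Qed.

Lemma ultra_finite_cover (T : Type) (I : finType) (F : set_system T)
    (A : I -> set T) :
  UltraFilter F -> (forall t, exists i, A i t) -> exists i, F (A i).
Proof.
move=> FU cover; apply: contrapT => noA.
have FnA i : F (~` A i).
  by case: (in_ultra_setVsetC (A i) FU) => // FAi; case: noA; exists i.
have [t /= nAt] := filter_ex (filter_forall_in (s := enum I) _ (fun i _ => FnA i)).
by have [i Ait] := cover t; exact: (nAt i (mem_enum _ i)).
Qed.

(* Each finite Q has a good colouring phi_Q; a colour is then chosen at every
   point along an ultrafilter refining the filter of cofinal finite sets. *)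
Theorem de_bruijn_erdos E (C : finType) :
  finite_edges E ->
  (forall Q, exists phi : V -> C,
     forall e, E e -> (forall x, e x -> x \in Q) -> ~ mono phi e) ->
  exists phi : V -> C, proper_coloring E phi.
Proof.
move=> Efin /choice[phiQ phiQ_good].
pose cone Q := [set Q' : seq V | {subset Q <= Q'}].
have coneF : ProperFilter (filter_from setT cone).
  apply: filter_from_proper => [|Q _]; last by exists Q.
  apply: filter_fromT_filter => [|Q1 Q2]; first by exists [::].
  by exists (Q1 ++ Q2) => Q' sub; split => x xQ; apply: sub; rewrite mem_cat xQ ?orbT.
have [U [Uultra coneU]] := ultraFilterLemma coneF.
have /choice[col colU] x : exists c, U [set Q | phiQ Q x = c].
  by apply: ultra_finite_cover => Q; exists (phiQ Q x).
exists col => e Ee mono_e; have [s def_e] := Efin e Ee.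
have agree : U [set Q | forall x, x \in s -> phiQ Q x = col x].
  by apply: filter_forall_in => x _; exact: colU.
have cone_s : U (cone s) by apply: coneU; exists s.
have [Q [sQ Qagree]] := filter_ex (filterI cone_s agree).
apply: (phiQ_good Q e Ee) => [x /def_e /sQ //|x y ex ey].
by rewrite !Qagree ?(mono_e x y) //; apply/def_e.
Qed.

End Compactness.

Lemma chi_on_ge_of_not_colorable E (x0 : V) (j : nat) :
  finite_edges E -> ~ colorable E j -> exists Q, chi_on_ge E Q j.+1.
Proof.
move=> Efin not_col.
have [Q Q_forces] : exists Q, forall phi : V -> 'I_j, mono_edge_in E Q phi.
  apply: contrapT => noQ; apply: not_col; apply: de_bruijn_erdos Efin _ => Q.
  apply: contrapT => nophi; apply: noQ; exists Q => phi; apply: contrapT => nomono.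
  by apply: nophi; exists phi => e Ee eQ mono_e; apply: nomono; exists e.
(* The extra point x0 makes the case j = 0, where L must be empty, vacuous. *)
exists (x0 :: Q) => C phi L sizeL QL; clear not_col.
have sub_Q : {subset Q <= x0 :: Q} by move=> x xQ; rewrite inE xQ orbT.
case: j Q_forces sizeL => [|j] Q_forces sizeL.
  by case: L sizeL QL => // _ /(_ x0 (mem_head _ _)).
pose psi x : 'I_j.+1 := inord (index (phi x) L).
have [e Ee [eQ mono_e]] := Q_forces psi.
exists e => //; split => [x /eQ /sub_Q //|x y ex ey].
have inL z : e z -> phi z \in L by move=> /eQ /sub_Q /QL.
have [xL yL] := (inL x ex, inL y ey).
have ltL z : z \in L -> (index z L < j.+1)%N by rewrite -index_mem => /leq_trans; apply.
have /(congr1 val) := mono_e x y ex ey.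
by rewrite /= !inordK ?ltL // => /(index_inj (phi x) xL yL).
Qed.

Lemma bounded_choice_subsets Q (G : (V -> Prop) -> seq V -> Prop) :
  (forall e, (forall x, e x -> x \in Q) -> exists P, G e P) ->
  exists W : seq V, forall e, (forall x, e x -> x \in Q) ->
    exists2 P, G e P & {subset P <= W}.
Proof.
elim: Q G => [|x Q IHQ] G G_ex.
  have [P GP] := G_ex (fun=> False) (fun _ => False_ind _); exists P => e e0.
  suff -> : e = (fun=> False) by exists P.
  by rewrite funeqE => y; rewrite propeqE; split => // /e0.
have in_cons e : (forall y, e y -> y \in Q) -> forall y, e y -> y \in x :: Q.
  by move=> eQ y /eQ yQ; rewrite inE yQ orbT.
have [W1 W1P] := IHQ G (fun e eQ => G_ex e (in_cons e eQ)).
have [|W2 W2P] := IHQ (fun e => G (fun y => e y \/ y = x)).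
  by move=> e eQ; apply: G_ex => y [/eQ yQ|->]; rewrite inE ?yQ ?eqxx ?orbT.
exists (W1 ++ W2) => e e_sub.
have [ex|nex] := pselect (e x).
  pose e' y := e y /\ y <> x.
  have e'Q y : e' y -> y \in Q.
    by case=> /e_sub + nyx; rewrite inE => /predU1P[|].
  have [P GP PW] := W2P e' e'Q.
  have -> : e = (fun y => e' y \/ y = x).
    rewrite funeqE => y; rewrite propeqE; rewrite /e'.
    by split => [ey|[[]//|->//]]; have [->|] := pselect (y = x); [right|left].
  by exists P => // y /PW; rewrite mem_cat orbC => ->.
have eQ y : e y -> y \in Q.
  by move=> ey; move: (e_sub y ey); rewrite inE => /predU1P[yx|//]; rewrite yx in ey.
have [P GP PW] := W1P e eQ.
by exists P => // y /PW; rewrite mem_cat => ->.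
Qed.

Lemma chi_on_ge_of_absorbs E F Q0 j :
  absorbs E F j -> chi_on_ge E Q0 j.+1 -> exists Q, chi_on_ge F Q j.+1.
Proof.
move=> absEF chiQ0.
have [|W W_abs] :=
  bounded_choice_subsets (Q := Q0) (G := fun e P => E e -> absorbs_in F j e P).
  move=> e _; have [/absEF[P absP]|nEe] := pselect (E e); first by exists P.
  by exists [::].
exists (Q0 ++ W) => C phi L sizeL QL.
have Q0L : {in Q0, forall x, phi x \in L} by move=> x x0; rewrite QL // mem_cat x0.
have [e Ee [eQ0 mono_e]] := chiQ0 C phi L sizeL Q0L.
have [P /(_ Ee) [eP absP] PW] := W_abs e eQ0.
have sPQ : {subset P <= Q0 ++ W} by move=> x /PW xW; rewrite mem_cat xW orbT.
exact: mono_edge_in_sub sPQ (absP C phi L sizeL (fun x xP => QL x (sPQ x xP)) mono_e).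
Qed.

Lemma absorbs0 E F (x0 : V) : finite_edges E -> absorbs E F 0.
Proof.
move=> Efin e /Efin[s def_e]; exists (x0 :: s); split.
  by move=> x /def_e xs; rewrite inE xs orbT.
by move=> C phi [] // _ /(_ x0 (mem_head _ _)).
Qed.

Lemma proper_of_absorbs E F k (C : finType) (phi : V -> C) :
  absorbs E F k -> (#|C| <= k)%N -> proper_coloring F phi -> proper_coloring E phi.
Proof.
move=> absEF Ck Fphi e /absEF[P [_ absP]] mono_e.
have [|e' Fe' [_ mono_e']] := absP C phi (enum C) _ (fun x _ => mem_enum C (phi x)) mono_e.
  by rewrite -cardE.
exact: Fphi e' Fe' mono_e'.
Qed.

End Hypergraphs.

Local Open Scope ring_scope.

Notation R := Rdefinitions.R.

Lemma InP (T : eqType) (x : T) (s : seq T) : List.In x s <-> x \in s.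
Proof.
elim: s => //= y s IHs; rewrite inE.
by split => [[->|/IHs->]|/orP[/eqP->|/IHs]]; rewrite ?eqxx ?orbT //; [left|right].
Qed.

Lemma size_filter_neq (T : eqType) (c : T) (L : seq T) :
  c \in L -> (size [seq x <- L | x != c] < size L)%N.
Proof.
move=> cL; rewrite size_filter -(count_predC (pred1 c)) -add1n leq_add2r.
by rewrite -has_count has_pred1.
Qed.

Lemma finite_positive_bounds (X : Type) (A : seq X) (P : X -> R -> Prop) :
  (forall x, List.In x A -> exists2 r, 0 < r & P x r) ->
  exists lo hi, 0 < lo /\ forall x, List.In x A -> exists2 r, P x r & lo <= r <= hi.
Proof.
elim: A => [|x A IHA] A_pos; first by exists 1, 0; split.
have [lo [hi [lo_gt0 A_bnd]]] := IHA (fun y yA => A_pos y (or_intror yA)).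
have [r r_gt0 Pxr] := A_pos x (or_introl erefl).
exists (Num.min lo r), (Num.max hi r); split; first by rewrite lt_min lo_gt0.
move=> y [<-|/A_bnd[r' Pyr' /andP[lo_r' r'_hi]]].
  by exists r; rewrite // ge_min le_max lexx !orbT.
by exists r'; rewrite // ge_min le_max lo_r' r'_hi.
Qed.

Lemma modz_eq_far (a b : int) (n : nat) :
  (a = b %[mod n.+1])%Z -> a != b -> (n.+1 <= `|a - b|)%N.
Proof.
move=> /eqP; rewrite eqz_mod_dvd => dvd_ab neq_ab.
by apply: dvdn_leq dvd_ab; rewrite absz_gt0 subr_eq0.
Qed.

Lemma floor_eq_dist (u v : R) : Num.floor u = Num.floor v -> `|u - v| < 1.
Proof.
move=> eq_fl; have /andP[u_ge u_lt] := floor_itv u; have /andP[v_ge v_lt] := floor_itv v.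
rewrite eq_fl intrD in u_ge u_lt; rewrite intrD in v_lt.
by rewrite ltr_norml; apply/andP; split; lra.
Qed.

Lemma floor_far_dist (u v : R) (n : nat) :
  (n.+1 <= `|Num.floor u - Num.floor v|)%N -> n%:R < `|u - v|.
Proof.
rewrite -(ler_nat R) natr_absz intr_norm intrB.
have /andP[u_ge u_lt] := floor_itv u; have /andP[v_ge v_lt] := floor_itv v.
rewrite intrD in u_lt v_lt; rewrite ler_normr ltr_normr -!natr1.
by move=> /orP[] ?; apply/orP; lra.
Qed.

Section Euclidean.
Variable d : nat.
Implicit Types (x y t : pt d) (f g : pt d -> pt d) (A T Y : pset d) (S : seq (pset d)).

Lemma sqr_edist x y : edist x y ^+ 2 = \sum_i (x ord0 i - y ord0 i) ^+ 2.
Proof. by rewrite sqr_sqrtr // sumr_ge0 // => i _; exact: sqr_ge0. Qed.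

Lemma edist_ge0 x y : 0 <= edist x y.
Proof. exact: sqrtr_ge0. Qed.

Lemma coord_le_edist x y i : `|x ord0 i - y ord0 i| <= edist x y.
Proof.
rewrite -sqrtr_sqr ler_sqrt ?sumr_ge0 // => [|j _]; last exact: sqr_ge0.
by rewrite (bigD1 i) //= lerDl sumr_ge0 // => j _; exact: sqr_ge0.
Qed.

Lemma edist_gt0 x y : x != y -> 0 < edist x y.
Proof.
move=> /eqP neq_xy; case: (boolP [forall i, x ord0 i == y ord0 i]).
  by move=> /forallP eq_xy; case: neq_xy; apply/rowP => i; apply/eqP.
move=> /forallPn[i neq_i]; apply: lt_le_trans (coord_le_edist x y i).
by rewrite normr_gt0 subr_eq0.
Qed.

(* Colour by the integer grid cell of side s, taken coordinatewise mod n.+1: equal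
   colours mean the same cell or cells at least n.+1 apart in some coordinate. *)
Lemma exists_band_coloring (lo hi : R) : 0 < lo ->
  exists K (phi : pt d -> 'I_K),
    forall x y, phi x = phi y -> edist x y < lo \/ hi < edist x y.
Proof.
move=> lo_gt0; pose s := lo / d.+1%:R.
have s_gt0 : 0 < s by rewrite divr_gt0.
pose n := (Num.trunc (hi / s)).+1.
have hi_lt : hi < n%:R * s by rewrite -ltr_pdivrMr // truncnS_gt.
pose fl x i := Num.floor (x ord0 i / s).
pose cell x i : 'I_n.+1 := inord `|(fl x i %% n.+1)%Z|.
exists _, (fun x => enum_rank [ffun i => cell x i]) => x y /enum_rank_inj/ffunP same.
have xyE i : x ord0 i - y ord0 i = (x ord0 i / s - y ord0 i / s) * s.
  by rewrite mulrBl !divfK ?gt_eqF.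
case: (boolP [forall i, fl x i == fl y i]) => [/forallP fl_eq|/forallPn[i fl_neq]].
- left; rewrite -(ltr_pXn2r (n := 2)) ?nnegrE ?edist_ge0 ?ltW // sqr_edist.
  apply: (@le_lt_trans _ _ (\sum_(i < d) s ^+ 2)).
    apply: ler_sum => i _; rewrite -(real_normK (num_real (x ord0 i - y ord0 i))).
    rewrite ler_pXn2r ?nnegrE ?normr_ge0 ?(ltW s_gt0) //.
    rewrite xyE normrM (gtr0_norm s_gt0) -[leRHS]mul1r ler_pM2r //.
    exact/ltW/floor_eq_dist/eqP/fl_eq.
  have lo_s : lo = s * d.+1%:R by rewrite /s divfK ?pnatr_eq0.
  rewrite sumr_const card_ord lo_s -mulr_natr -natr1; nra.
- right; apply: lt_le_trans (coord_le_edist x y i).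
  have same_mod : (fl x i = fl y i %[mod n.+1])%Z.
    have := congr1 val (same i); rewrite !ffunE /= !inordK; last 2 first.
    + by rewrite -ltz_nat gez0_abs ?modz_ge0 ?ltz_pmod.
    + by rewrite -ltz_nat gez0_abs ?modz_ge0 ?ltz_pmod.
    by move/(congr1 Posz); rewrite !gez0_abs ?modz_ge0.
  have := floor_far_dist (modz_eq_far same_mod fl_neq).
  rewrite xyE normrM (gtr0_norm s_gt0) -(ltr_pM2r s_gt0); exact: lt_trans hi_lt.
Qed.

Lemma exists_notin (B : seq (pt d)) : (0 < d)%N -> exists t, t \notin B.
Proof.
move=> d_gt0; pose f (n : nat) : pt d := const_mx n%:R.
have f_inj : injective f.
  move=> n1 n2 /matrixP/(_ ord0 (Ordinal d_gt0)).
  by rewrite !mxE => /eqP; rewrite eqr_nat => /eqP.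
apply: contrapT => /forallNP allB.
have sub : {subset map f (iota 0 (size B).+1) <= B}.
  by move=> t _; apply: contrapT => /negP; exact: allB.
have uniq_f : uniq (map f (iota 0 (size B).+1)) by rewrite (map_inj_uniq f_inj) iota_uniq.
have := uniq_leq_size uniq_f sub.
by rewrite size_map size_iota ltnn.
Qed.

Lemma isometry_comp f g : isometry f -> isometry g -> isometry (f \o g).
Proof. by move=> iso_f iso_g x y /=; rewrite iso_f iso_g. Qed.

Lemma isometry_addr t : isometry (fun x => x + t).
Proof.
move=> x y; rewrite /edist; congr Num.sqrt; apply: eq_bigr => i _.
by rewrite !mxE opprD addrACA subrr addr0.
Qed.

Definition img f A : pset d := fun y => exists x, A x /\ f x = y.

Definition add_point T (p : pt d) : pset d := fun x => T x \/ x = p.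

Lemma HM_img_mem S T f : List.In T S -> isometry f -> HM S (img f T).
Proof. by move=> TS iso_f; exists T; split => //; exists f. Qed.

Lemma HM_img S Y g : HM S Y -> isometry g -> HM S (img g Y).
Proof.
move=> [T [TS [f [iso_f def_Y]]]] iso_g; exists T; split => //.
exists (g \o f); split => [|y]; first exact: isometry_comp.
split => [[x [/def_Y[z [Tz <-]] <-]]|[z [Tz <-]]]; first by exists z.
by exists (f z); split => //; apply/def_Y; exists z.
Qed.

Lemma HM_sub S S' Y : (forall T, List.In T S -> List.In T S') -> HM S Y -> HM S' Y.
Proof. by move=> sSS' [T [/sSS' TS' congr_TY]]; exists T. Qed.

Lemma is_gon_add_point m T p : is_gon m T -> ~ T p -> is_gon m.+1 (add_point T p).
Proof.
move=> [s [uniq_s [size_s def_T]]] nTp; exists (p :: s).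
split; first by rewrite /= uniq_s andbT; apply/negP => /def_T.
split => [|x]; first by rewrite /= size_s.
rewrite inE; split => [[/def_T xs|->]|/orP[/eqP->|/def_T]].
- by rewrite xs orbT.
- by rewrite eqxx.
- by right.
- by left.
Qed.

Definition one_point_extensions (M S : seq (pset d)) :=
  forall Y, List.In Y S -> exists T p, [/\ List.In T M, ~ T p & Y = add_point T p].

Definition has_point_extensions (M : seq (pset d)) (Q : seq (pt d)) S :=
  forall T, List.In T M ->
    exists t, forall q, q \in Q -> List.In (add_point T (q + t)) S.

Lemma exists_translate_off T (sT Q : seq (pt d)) : (0 < d)%N ->
  (forall x, T x <-> x \in sT) -> exists t, forall q, q \in Q -> ~ T (q + t).
Proof.
move=> d_gt0 def_T; have [t t_off] := exists_notin [seq a - q | a <- sT, q <- Q] d_gt0.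
exists t => q qQ /def_T qt_T; case/negP: t_off; apply/allpairsP.
by exists (q + t, q); rewrite /= qt_T qQ addrC addKr.
Qed.

Lemma exists_one_point_extensions m (M : seq (pset d)) (Q : seq (pt d)) :
  (0 < d)%N -> (forall T, List.In T M -> is_gon m T) ->
  exists X, one_point_extensions M X /\ has_point_extensions M Q X.
Proof.
move=> d_gt0; elim: M => [|T M IHM] gonM; first by exists [::]; split => [Y|T] [].
have [X [extX XQ]] := IHM (fun T' T'M => gonM T' (or_intror T'M)).
have [sT [_ [_ def_T]]] := gonM T (or_introl erefl).
have [t t_off] := exists_translate_off Q d_gt0 def_T.
exists ([seq add_point T (q + t) | q <- Q] ++ X); split.
  move=> Y /(List.in_app_or _ _ Y)[|/extX[T' [p [T'M nT'p ->]]]]; last first.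
    by exists T', p; split => //; right.
  by case/List.in_map_iff => q [<- qQ]; exists T, (q + t); split; [left|apply/t_off/InP|].
move=> T' [<-|T'M].
  exists t => q /InP qQ; apply/List.in_or_app; left.
  exact: (List.in_map (fun q => add_point T (q + t))).
have [t' t'X] := XQ T' T'M.
by exists t' => q qQ; apply/List.in_or_app; right; exact: t'X.
Qed.

End Euclidean.

Section OnePointExtensions.
Variables (d m : nat) (M : seq (pset d)).
Hypothesis gonM : forall T, List.In T M -> is_gon m T.

Lemma finite_edges_HM : finite_edges (HM M).
Proof.
move=> e [T [/gonM[sT [_ [_ def_T]]] [f [_ def_e]]]]; exists (map f sT) => y.
split => [/def_e[x [/def_T xT <-]]|/mapP[x /def_T Tx ->]]; first exact: map_f.
by apply/def_e; exists x.
Qed.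

Lemma colorable_HM : (1 < m)%N -> exists k, colorable (HM M) k.
Proof.
move=> m_gt1.
have [|lo [hi [lo_gt0 bounds]]] := finite_positive_bounds (A := M)
    (P := fun T r => exists a b, [/\ T a, T b & edist a b = r]).
  move=> T /gonM[s [uniq_s [size_s def_T]]].
  case: s uniq_s size_s def_T => [|a [|b s]] uniq_s size_s def_T;
    rewrite -size_s // in m_gt1.
  have neq_ab : a != b by move: uniq_s => /= /andP[]; rewrite inE negb_or => /andP[].
  exists (edist a b); first exact: edist_gt0.
  by exists a, b; split => //; apply/def_T; rewrite !inE eqxx ?orbT.
have [k [phi band]] := exists_band_coloring d hi lo_gt0.
exists k, phi => e [T [/bounds[_ [a [b [Ta Tb <-]]] /andP[lo_ab ab_hi]]]].
move=> [f [iso_f def_e]] mono_e.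
have [fa fb] : e (f a) /\ e (f b) by split; apply/def_e; [exists a|exists b].
by case: (band _ _ (mono_e _ _ fa fb)); rewrite iso_f => ?; lra.
Qed.

Lemma is_gon_one_point_extensions S :
  one_point_extensions M S -> forall Y, List.In Y S -> is_gon m.+1 Y.
Proof. by move=> extS Y /extS[T [p [/gonM gonT nTp ->]]]; exact: is_gon_add_point. Qed.

Lemma proper_of_one_point_extensions S (C : Type) (phi : pt d -> C) :
  one_point_extensions M S -> proper_coloring (HM M) phi -> proper_coloring (HM S) phi.
Proof.
move=> extS properM Y [_ [/extS[T [p [TM _ ->]]] [f [iso_f def_Y]]]] mono_Y.
apply: (properM _ (HM_img_mem TM iso_f)) => _ _ [x [Tx <-]] [y [Ty <-]].
by apply: mono_Y; apply/def_Y; [exists x|exists y]; split => //; left.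
Qed.

(* If f T has colour c, either some f (q + t) has colour c too, closing a
   monochromatic one-point extension, or f (Q + t) is coloured without c. *)
Lemma absorbs_of_chi_on_ge S (Q : seq (pt d)) j : (0 < m)%N ->
  has_point_extensions M Q S -> chi_on_ge (HM S) Q j -> absorbs (HM M) (HM S) j.
Proof.
move=> m_gt0 extS chiQ e [T [TM [f [iso_f def_e]]]].
have [t tS] := extS T TM; have [sT [_ [size_sT def_T]]] := gonM TM.
have /hasP[a aT _] : has predT sT by rewrite has_predT size_sT.
pose g q := f (q + t).
have iso_g : isometry g by apply: isometry_comp iso_f (isometry_addr t).
exists (map f sT ++ map g Q); split.
  by move=> y /def_e[x [/def_T xT <-]]; rewrite mem_cat map_f.
move=> C phi L sizeL PL mono_e.
have colT x : T x -> phi (f x) = phi (f a).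
  by move=> Tx; apply: mono_e; apply/def_e; [exists x|exists a; split => //; apply/def_T].
have [[q qQ gq]|no_q] := pselect (exists2 q, q \in Q & phi (g q) = phi (f a)).
  exists (img f (add_point T (q + t))); first exact: HM_img_mem (tS q qQ) iso_f.
  have colTq x : add_point T (q + t) x -> phi (f x) = phi (f a) by case=> [/colT|->].
  split => [_ [x [[/def_T xT|->] <-]]|_ _ [x [Tqx <-]] [y [Tqy <-]]].
  - by rewrite mem_cat map_f.
  - by rewrite mem_cat (map_f g qQ) orbT.
  - by rewrite !colTq.
have faL : phi (f a) \in L by rewrite PL // mem_cat map_f.
have sizeL' := leq_trans (size_filter_neq faL) sizeL.
have [|e' Se' [e'Q mono_e']] := chiQ C (phi \o g) _ sizeL'.
  move=> q qQ; rewrite mem_filter PL ?mem_cat ?(map_f g qQ) ?orbT // andbT.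
  by apply/eqP => gq; apply: no_q; exists q.
exists (img g e'); first exact: HM_img Se' iso_g.
split => [_ [q [/e'Q qQ <-]]|_ _ [x [e'x <-]] [y [e'y <-]]]; last exact: mono_e'.
by rewrite mem_cat map_f ?orbT.
Qed.

Lemma exists_absorbing k : (0 < d)%N -> (0 < m)%N ->
  (forall j, (j < k)%N -> ~ colorable (HM M) j) ->
  forall j, (j <= k)%N -> exists S, one_point_extensions M S /\ absorbs (HM M) (HM S) j.
Proof.
move=> d_gt0 m_gt0 not_col; elim=> [_|j IHj lt_jk].
  by exists [::]; split => [Y []|]; exact: absorbs0 0 finite_edges_HM.
have [S [extS absS]] := IHj (ltnW lt_jk).
have [Q0 chiQ0] := chi_on_ge_of_not_colorable 0 finite_edges_HM (not_col j lt_jk).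
have [Q chiQ] := chi_on_ge_of_absorbs absS chiQ0.
have [X [extX XQ]] := exists_one_point_extensions Q d_gt0 gonM.
exists (S ++ X); split.
  by move=> Y /(List.in_app_or _ _ Y)[/extS|/extX].
have SX T : List.In T S -> List.In T (S ++ X) by move=> TS; apply/List.in_or_app; left.
have chiQ' := chi_on_ge_sub (fun Y => HM_sub (Y := Y) SX) chiQ.
apply: absorbs_of_chi_on_ge m_gt0 _ chiQ' => T TM.
have [t tX] := XQ T TM; exists t => q qQ; apply/List.in_or_app; right; exact: tX.
Qed.

End OnePointExtensions.

Theorem theorem3p1 (d m : nat) (M : seq (pset d)) :
  (1 <= d)%N -> (2 <= m)%N ->
  M <> [::] -> (forall T, List.In T M -> is_gon m T) ->
  exists S : seq (pset d),
    (forall T, List.In T S -> is_gon m.+1 T) /\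
    equivalent_hg (HM M) (HM S).
Proof.
move=> d_gt0 m_gt1 _ gonM.
have [k0 col_k0] := colorable_HM gonM m_gt1.
have [k [col_k min_k]] := exists_chromatic_number col_k0.
have [S [extS absS]] := exists_absorbing gonM d_gt0 (ltnW m_gt1) min_k (leqnn k).
have M_to_S := proper_of_one_point_extensions extS.
have S_to_M (C : finType) (phi : pt d -> C) := proper_of_absorbs (phi := phi) absS.
exists S; split; first by move=> Y /(is_gon_one_point_extensions gonM extS).
exists k; split => //; split; first split.
- by have [phi properM] := col_k; exists phi; exact: M_to_S.
- move=> k' lt_k'k [phi properS]; apply: (min_k k' lt_k'k); exists phi.
  by apply: S_to_M properS; rewrite card_ord ltnW.
- move=> C card_C phi; split; first exact: M_to_S.
  by apply: S_to_M; rewrite card_C.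
Qed.
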